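(* Let $c>0$ be a constant, let $b_0\in(\pi/2,\pi)$ be the smallest positive solution of $cb+\tan b=0$, set $\alpha_0=1/|\cos b_0|$, and let $\alpha>\alpha_0$. Then the stationary system $$(c\bar u)'=\frac{\alpha\bar v}{1+\bar u+\bar v}-\bar u,\qquad -(c\bar v)'=\frac{\alpha\bar u}{1+\bar u+\bar v}-\bar v\quad\text{on }[0,1],$$ with boundary conditions $\bar u(0)=0$, $\bar v(1)=0$, has a nontrivial solution.
   Context: This is the stationary version of the system $\partial_t u+\partial_x(cu)=\frac{\alpha v}{1+u+v}-u$, $\partial_t v-\partial_x(cv)=\frac{\alpha u}{1+u+v}-v$ with Dirichlet-type boundary conditions (DBC) $u(0,t)=0$, $v(1,t)=0$. *)

From Stdlib Require Export Reals.
Open Scope R_scope.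

Definition smallest_pos_root (c b0 : R) : Prop :=
  0 < b0 /\ cos b0 <> 0 /\ c * b0 + tan b0 = 0 /\
  (forall b, 0 < b < b0 -> cos b <> 0 -> c * b + tan b <> 0).

Definition stationary_solution (c alpha : R) (u v : R -> R) : Prop :=
  exists u' v' : R -> R,
    (forall x, derivable_pt_lim u x (u' x)) /\
    (forall x, derivable_pt_lim v x (v' x)) /\
    (forall x, 0 <= x <= 1 ->
       1 + u x + v x <> 0 /\
       c * u' x = alpha * v x / (1 + u x + v x) - u x /\
       - (c * v' x) = alpha * u x / (1 + u x + v x) - v x) /\
    u 0 = 0 /\ v 1 = 0.

From Coquelicot Require Import Coquelicot.
From Stdlib Require Import Reals Lra Psatz Ranalysis5 Rtrigo_facts ClassicalEpsilon.
Open Scope R_scope.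

(* With s = u + v and d = u - v the system reads
     c s' = - d (alpha + 1 + s) / (1 + s),    c d' = s (alpha - 1 - s) / (1 + s),
   so G s + d^2 / 2 is a first integral, where G 0 = 0 and
   G' s = g s = s (alpha - 1 - s) / (alpha + 1 + s). The boundary conditions say d = -s at
   x = 0 and d = s at x = 1, so on the level through s = d = a (level a = G a + a^2 / 2) we
   put d = a t with t in [-1, 1] and s = S a t = G^-1 (level a - a^2 t^2 / 2); then
   dx/dt = F a t = a Phi (S a t) with Phi s = c (1 + s) / (s (alpha - 1 - s)), and the orbit
   fits in [0, 1] exactly when the time map T a = \int_{-1}^{1} F a t dt equals 1.
   T is continuous in a. When the level approaches the equilibrium value G (alpha - 1) the
   integrand behaves like 1 / sqrt (t^2 + k) with k -> 0, so T a -> +oo. For small a the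
   quadratic bounds on G give T a <= B m -> B 0 = c b / (alpha sin b), the length of the
   corresponding orbit of the linearized system, where cos b = -1/alpha. Since
   alpha |cos b0| > 1 we have b < b0, and the minimality of b0 gives c b + tan b < 0, i.e.
   B 0 < 1. The intermediate value theorem then produces an amplitude a with T a = 1. *)

Lemma increment_le_of_deriv_le (f g f' g' : R -> R) (p q : R) : p <= q ->
  (forall x, p <= x <= q -> derivable_pt_lim f x (f' x)) ->
  (forall x, p <= x <= q -> derivable_pt_lim g x (g' x)) ->
  (forall x, p < x < q -> f' x <= g' x) ->
  f q - f p <= g q - g p.
Proof.
  intros Hpq Hf Hg Hle. destruct (Req_dec p q) as [->|Hne]; [lra|].
  destruct (MVT_cor2 (fun x => g x - f x) (fun x => g' x - f' x) p q)
    as [z [Hz1 Hz2]]; [lra| |].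
  - intros z Hz. apply derivable_pt_lim_minus; auto.
  - specialize (Hle z Hz2). nra.
Qed.

Lemma lipschitz_continuity (f : R -> R) K : 0 <= K ->
  (forall x y, Rabs (f x - f y) <= K * Rabs (x - y)) -> continuity f.
Proof.
  intros HK Hf x eps He.
  exists (eps / (K + 1)). split; [apply Rdiv_lt_0_compat; lra|].
  intros y [_ Hy]. simpl in *. unfold R_dist in *.
  apply Rlt_div_r in Hy; [|lra].
  eapply Rle_lt_trans; [apply Hf|].
  pose proof (Rabs_pos (y - x)). nra.
Qed.

Lemma continuity_pt_lt_near (f : R -> R) x L : continuity_pt f x -> f x < L ->
  exists d, 0 < d /\ forall y, Rabs (y - x) < d -> f y < L.
Proof.
  intros Hc Hl. destruct (Hc (L - f x)) as [d [Hd H]]; [lra|].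
  exists d. split; auto. intros y Hy.
  destruct (Req_dec y x) as [->|Hne]; [lra|].
  assert (Hdist : R_dist (f y) (f x) < L - f x) by (apply H; repeat split; auto).
  unfold R_dist in Hdist. apply Rabs_def2 in Hdist. lra.
Qed.

Section IntervalInverse.
Variables (f f' : R -> R) (p q : R).
Hypothesis p_lt_q : p < q.
Hypothesis f_deriv : forall x, p <= x <= q -> derivable_pt_lim f x (f' x).
Hypothesis f'_pos : forall x, p < x < q -> 0 < f' x.

Lemma incr_on_interval x y : p <= x -> x < y -> y <= q -> f x < f y.
Proof.
  intros Hx Hxy Hy.
  destruct (MVT_cor2 f f' x y Hxy) as [z [Hz1 Hz2]].
  - intros z Hz; apply f_deriv; lra.
  - assert (0 < f' z) by (apply f'_pos; lra). nra.
Qed.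

Lemma le_of_image_le x y : p <= x <= q -> p <= y <= q -> f x <= f y -> x <= y.
Proof.
  intros Hx Hy H. destruct (Rle_or_lt x y) as [|Hlt]; auto.
  assert (f y < f x) by (apply incr_on_interval; lra). lra.
Qed.

Let f_continuous x : p <= x <= q -> continuity_pt f x.
Proof. intros Hx. apply derivable_continuous_pt. exists (f' x). now apply f_deriv. Qed.

(* Arbitrary outside [f p, f q]. *)
Definition interval_inv (y : R) : R :=
  epsilon (inhabits 0) (fun x => p <= x <= q /\ f x = y).

Lemma interval_inv_spec y : f p <= y <= f q ->
  p <= interval_inv y <= q /\ f (interval_inv y) = y.
Proof.
  intros Hy. unfold interval_inv. apply epsilon_spec.
  destruct (f_interv_is_interv f p q y p_lt_q Hy f_continuous) as [x Hx].
  now exists x.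
Qed.

Lemma interval_inv_f x : p <= x <= q -> interval_inv (f x) = x.
Proof.
  intros Hx. assert (Hy : f p <= f x <= f q).
  { split; [destruct (Req_dec p x) as [->|] | destruct (Req_dec x q) as [->|]];
      try lra; left; apply incr_on_interval; lra. }
  destruct (interval_inv_spec _ Hy) as [H1 H2].
  apply Rle_antisym; apply le_of_image_le; lra.
Qed.

Lemma interval_inv_le y1 y2 : f p <= y1 <= f q -> f p <= y2 <= f q ->
  y1 <= y2 -> interval_inv y1 <= interval_inv y2.
Proof.
  intros H1 H2 H. destruct (interval_inv_spec _ H1), (interval_inv_spec _ H2).
  apply le_of_image_le; lra.
Qed.

Lemma continuity_pt_interval_inv y : f p < y < f q -> continuity_pt interval_inv y.
Proof.
  intros Hy. apply (continuity_pt_recip_interv f interval_inv p q p_lt_q).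
  - intros; apply incr_on_interval; lra.
  - intros z Hz1 Hz2. unfold comp, id. apply interval_inv_spec; lra.
  - intros z Hz1 Hz2. apply interval_inv_spec; lra.
  - exact f_continuous.
  - exact Hy.
Qed.

Lemma derivable_pt_lim_interval_inv y : f p < y < f q ->
  derivable_pt_lim interval_inv y (1 / f' (interval_inv y)).
Proof.
  intros Hy.
  assert (Hp : interval_inv (f p) = p) by (apply interval_inv_f; lra).
  assert (Hq : interval_inv (f q) = q) by (apply interval_inv_f; lra).
  assert (Prf : forall a, interval_inv (f p) <= a <= interval_inv (f q) -> derivable_pt f a).
  { intros a Ha. rewrite Hp, Hq in Ha. exists (f' a). now apply f_deriv. }
  destruct (interval_inv_spec y ltac:(lra)) as [Hb Hfb].
  assert (Hin : p < interval_inv y < q).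
  { destruct Hb as [[Hb1|Hb1] [Hb2|Hb2]]; try (rewrite <- Hb1 in Hfb);
      try (rewrite Hb2 in Hfb); lra. }
  assert (Hincr : interval_inv (f p) <= interval_inv y <= interval_inv (f q))
    by (rewrite Hp, Hq; lra).
  assert (Hder : derive_pt f (interval_inv y) (Prf _ Hincr) = f' (interval_inv y))
    by (apply derive_pt_eq_0, f_deriv; lra).
  rewrite <- Hder.
  apply (derivable_pt_lim_recip_interv f interval_inv (f p) (f q) y Prf
           (continuity_pt_interval_inv y Hy)); [apply incr_on_interval; lra | exact Hy | |].
  - intros z Hz. unfold comp, id. apply interval_inv_spec; lra.
  - rewrite Hder. specialize (f'_pos _ Hin). lra.
Qed.
End IntervalInverse.

Lemma derivable_pt_lim_piecewise (F f : R -> R) x l d0 : 0 < d0 ->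
  derivable_pt_lim f x l -> F x = f x ->
  (forall h, h <> 0 -> Rabs h < d0 -> F (x + h) = f (x + h) \/ F (x + h) = F x + l * h) ->
  derivable_pt_lim F x l.
Proof.
  intros Hd0 Hf Hx Hh eps He.
  destruct (Hf eps He) as [d Hd].
  assert (Hm : 0 < Rmin d d0) by (apply Rmin_pos; [apply cond_pos|lra]).
  exists (mkposreal _ Hm). simpl. intros h Hh0 Hhd.
  pose proof (Rmin_l d d0). pose proof (Rmin_r d d0).
  destruct (Hh h Hh0 ltac:(lra)) as [E|E]; rewrite E.
  - rewrite Hx. apply Hd; auto. lra.
  - replace ((F x + l * h - F x) / h - l) with 0 by (field; auto).
    rewrite Rabs_R0. lra.
Qed.

(* Continuation by the tangent lines at the end points: it makes a solution on
   [0, 1] differentiable on all of R. *)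
Definition affine_ext (f f' : R -> R) (x : R) :=
  if Rlt_dec x 0 then f 0 + f' 0 * x
  else if Rlt_dec 1 x then f 1 + f' 1 * (x - 1) else f x.

Definition affine_ext' (f' : R -> R) (x : R) :=
  if Rlt_dec x 0 then f' 0 else if Rlt_dec 1 x then f' 1 else f' x.

Lemma affine_ext_in f f' x : 0 <= x <= 1 ->
  affine_ext f f' x = f x /\ affine_ext' f' x = f' x.
Proof.
  intros. unfold affine_ext, affine_ext'.
  destruct Rlt_dec; [lra|]. destruct Rlt_dec; [lra|]. auto.
Qed.

Lemma derivable_pt_lim_affine_ext f f' :
  (forall x, 0 <= x <= 1 -> derivable_pt_lim f x (f' x)) ->
  forall x, derivable_pt_lim (affine_ext f f') x (affine_ext' f' x).
Proof.
  intros Hf x.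
  assert (Lin : forall p q r, derivable_pt_lim (fun z => p + q * (z - r)) x q).
  { intros. apply is_derive_Reals. auto_derive; auto. ring. }
  unfold affine_ext' at 1.
  destruct (Rlt_dec x 0) as [Hx|Hx]; [|destruct (Rlt_dec 1 x) as [Hx1|Hx1]].
  - apply (derivable_pt_lim_piecewise _ (fun z => f 0 + f' 0 * (z - 0)) x _ (-x));
      [lra | apply Lin | |].
    + unfold affine_ext. destruct Rlt_dec; [ring|lra].
    + intros h _ Hh. left. apply Rabs_def2 in Hh.
      unfold affine_ext. destruct Rlt_dec; [ring|lra].
  - apply (derivable_pt_lim_piecewise _ (fun z => f 1 + f' 1 * (z - 1)) x _ (x - 1));
      [lra | apply Lin | |].
    + unfold affine_ext. destruct Rlt_dec; [lra|]. destruct Rlt_dec; [ring|lra].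
    + intros h _ Hh. left. apply Rabs_def2 in Hh.
      unfold affine_ext. destruct Rlt_dec; [lra|]. destruct Rlt_dec; [ring|lra].
  - assert (Hin : 0 <= x <= 1) by lra.
    destruct (affine_ext_in f f' x Hin) as [E _].
    destruct (Req_dec x 0) as [->|Hx0]; [|destruct (Req_dec x 1) as [->|Hx1']].
    + apply (derivable_pt_lim_piecewise _ f 0 _ 1); [lra | apply Hf; lra | exact E |].
      intros h Hh0 Hh. apply Rabs_def2 in Hh.
      destruct (Rtotal_order h 0) as [Hn|[Hz|Hp]]; [| contradiction |].
      * right. rewrite E. unfold affine_ext. destruct Rlt_dec; [ring|lra].
      * left. apply affine_ext_in; lra.
    + apply (derivable_pt_lim_piecewise _ f 1 _ 1); [lra | apply Hf; lra | exact E |].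
      intros h Hh0 Hh. apply Rabs_def2 in Hh.
      destruct (Rtotal_order h 0) as [Hn|[Hz|Hp]]; [| contradiction |].
      * left. apply affine_ext_in; lra.
      * right. rewrite E. unfold affine_ext.
        destruct Rlt_dec; [lra|]. destruct Rlt_dec; [ring|lra].
    + apply (derivable_pt_lim_piecewise _ f x _ (Rmin x (1 - x)));
        [apply Rmin_pos; lra | apply Hf; lra | exact E |].
      intros h _ Hh. left. pose proof (Rmin_l x (1 - x)). pose proof (Rmin_r x (1 - x)).
      apply Rabs_def2 in Hh. apply affine_ext_in; lra.
Qed.

Lemma stationary_solution_of_sum_diff (c alpha : R) (s d s' d' : R -> R) :
  (forall x, 0 <= x <= 1 -> derivable_pt_lim s x (s' x)) ->
  (forall x, 0 <= x <= 1 -> derivable_pt_lim d x (d' x)) ->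
  (forall x, 0 <= x <= 1 ->
     1 + s x <> 0 /\
     c * s' x = - d x * (alpha + 1 + s x) / (1 + s x) /\
     c * d' x = s x * (alpha - 1 - s x) / (1 + s x)) ->
  s 0 = - d 0 -> s 1 = d 1 ->
  stationary_solution c alpha
    (affine_ext (fun x => (s x + d x) / 2) (fun x => (s' x + d' x) / 2))
    (affine_ext (fun x => (s x - d x) / 2) (fun x => (s' x - d' x) / 2)).
Proof.
  intros Hs Hd Hode Hs0 Hs1.
  exists (affine_ext' (fun x => (s' x + d' x) / 2)), (affine_ext' (fun x => (s' x - d' x) / 2)).
  split; [|split; [|split; [|split]]].
  - apply derivable_pt_lim_affine_ext. intros x Hx.
    apply derivable_pt_lim_div_scal, derivable_pt_lim_plus; auto.
  - apply derivable_pt_lim_affine_ext. intros x Hx.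
    apply derivable_pt_lim_div_scal, derivable_pt_lim_minus; auto.
  - intros x Hx.
    destruct (affine_ext_in (fun x => (s x + d x) / 2) (fun x => (s' x + d' x) / 2) x Hx)
      as [-> ->].
    destruct (affine_ext_in (fun x => (s x - d x) / 2) (fun x => (s' x - d' x) / 2) x Hx)
      as [-> ->].
    destruct (Hode x Hx) as [Hnz [Es Ed]].
    replace (1 + (s x + d x) / 2 + (s x - d x) / 2) with (1 + s x) by field.
    split; [exact Hnz|].
    split; [replace (c * ((s' x + d' x) / 2)) with ((c * s' x + c * d' x) / 2) by field
           |replace (- (c * ((s' x - d' x) / 2))) with (- (c * s' x - c * d' x) / 2) by field];
      rewrite Es, Ed; field; exact Hnz.
  - destruct (affine_ext_in (fun x => (s x + d x) / 2) (fun x => (s' x + d' x) / 2) 0)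
      as [-> _]; [lra|].
    rewrite Hs0. field.
  - destruct (affine_ext_in (fun x => (s x - d x) / 2) (fun x => (s' x - d' x) / 2) 1)
      as [-> _]; [lra|].
    rewrite Hs1. field.
Qed.

Lemma clamp_lipschitz a1 a2 x y : a1 <= a2 ->
  Rabs (Rmax a1 (Rmin x a2) - Rmax a1 (Rmin y a2)) <= Rabs (x - y).
Proof.
  intros H. unfold Rmax, Rmin.
  repeat destruct Rle_dec; unfold Rabs; repeat destruct Rcase_abs; lra.
Qed.

Lemma is_RInt_inv_sqrt_sq_add (C k : R) : 0 < k ->
  is_RInt (fun t => C / sqrt (t * t + k)) (-1) 1
    (C * (ln (1 + sqrt (1 + k)) - ln (-1 + sqrt (1 + k)))).
Proof.
  intros Hk.
  assert (Hpos : forall t, 0 < t + sqrt (t * t + k)).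
  { intros t. assert (Hs : 0 < sqrt (t * t + k)) by (apply sqrt_lt_R0; nra).
    assert (sqrt (t * t + k) * sqrt (t * t + k) = t * t + k) by (apply sqrt_sqrt; nra).
    nra. }
  set (P := fun t => C * ln (t + sqrt (t * t + k))).
  replace (C * (ln (1 + sqrt (1 + k)) - ln (-1 + sqrt (1 + k)))) with (minus (P 1) (P (-1))).
  2:{ unfold P, minus, plus, opp; simpl.
      replace (1 * 1 + k) with (1 + k) by ring. replace (-1 * -1 + k) with (1 + k) by ring.
      ring. }
  apply (is_RInt_derive (V := R_CompleteNormedModule)).
  - intros x _. unfold P. auto_derive.
    + split; [nra|]. split; [apply Hpos|auto].
    + assert (0 < sqrt (x * x + k)) by (apply sqrt_lt_R0; nra).
      pose proof (Hpos x). field. lra.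
  - intros x _. apply continuity_pt_filterlim, derivable_continuous_pt, ex_derive_Reals_0.
    auto_derive. assert (0 < sqrt (x * x + k)) by (apply sqrt_lt_R0; nra).
    split; [nra|]. split; [lra|auto].
Qed.

Lemma is_RInt_inv_sqrt_sub_sq (C K : R) : 1 < K ->
  is_RInt (fun t => C / sqrt (K - t * t)) (-1) 1 (2 * C * asin (1 / sqrt K)).
Proof.
  intros HK.
  assert (HsK : 1 < sqrt K) by (rewrite <- sqrt_1; apply sqrt_lt_1; lra).
  assert (EK : sqrt K * sqrt K = K) by (apply sqrt_sqrt; lra).
  set (P := fun t => C * asin (t / sqrt K)).
  replace (2 * C * asin (1 / sqrt K)) with (minus (P 1) (P (-1))).
  2:{ unfold P, minus, plus, opp; simpl.
      replace (-1 / sqrt K) with (- (1 / sqrt K)) by (field; lra).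
      rewrite asin_opp. ring. }
  apply (is_RInt_derive (V := R_CompleteNormedModule)).
  - intros x Hx. rewrite Rmin_left, Rmax_right in Hx by lra.
    assert (Hz : -1 < x / sqrt K < 1).
    { split; [apply Rlt_div_r | apply Rlt_div_l]; lra. }
    assert (HKx : 0 < K - x * x) by nra.
    apply is_derive_Reals.
    replace (C / sqrt (K - x * x))
      with (C * (1 / sqrt (1 - x / sqrt K * (x / sqrt K)) * (1 / sqrt K))).
    + apply derivable_pt_lim_scal.
      apply (derivable_pt_lim_comp (fun t => t / sqrt K) asin).
      * apply is_derive_Reals. auto_derive; [lra|]. field; lra.
      * apply (derive_pt_eq_1 _ _ _ (derivable_pt_asin _ Hz)).
        rewrite derive_pt_asin. unfold Rsqr. reflexivity.
    + replace (1 - x / sqrt K * (x / sqrt K)) with ((K - x * x) / K)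
        by (replace (x / sqrt K * (x / sqrt K)) with (x * x / (sqrt K * sqrt K))
              by (field; lra); rewrite EK; field; lra).
      rewrite sqrt_div by lra.
      assert (0 < sqrt (K - x * x)) by (apply sqrt_lt_R0; lra).
      field. lra.
  - intros x Hx. rewrite Rmin_left, Rmax_right in Hx by lra.
    apply continuity_pt_filterlim, derivable_continuous_pt, ex_derive_Reals_0.
    assert (0 < K - x * x) by nra.
    auto_derive. repeat split; [lra|]. apply Rgt_not_eq, sqrt_lt_R0. lra.
Qed.

(* Just right of [PI / 2] the function [c b + tan b] tends to [-oo]; a sign change
   on (PI / 2, b0) would therefore produce a root below [b0]. *)
Lemma tan_root_sign_before c b0 b : 0 < c -> smallest_pos_root c b0 -> b0 < PI ->
  PI / 2 < b < b0 -> c * b + tan b < 0.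
Proof.
  intros Hc [_ [_ [_ Hmin]]] Hb0 Hb.
  assert (Hcos : forall z, PI / 2 < z < PI -> cos z <> 0)
    by (intros z Hz; apply Rlt_not_eq, cos_lt_0; lra).
  destruct (Rlt_or_le (c * b + tan b) 0) as [|[Hgt|Heq]]; auto; exfalso;
    [|apply (Hmin b); [lra | apply Hcos; lra | lra]].
  pose proof PI_RGT_0.
  set (M := Rmax (c * PI + 1) (tan (PI - b) + 1)).
  assert (HM1 : c * PI + 1 <= M) by apply Rmax_l.
  assert (HM2 : tan (PI - b) + 1 <= M) by apply Rmax_r.
  destruct (atan_bound M) as [HaM1 HaM2].
  assert (HaM3 : PI - b < atan M).
  { rewrite <- (atan_tan (PI - b)) by lra. apply atan_increasing. lra. }
  set (b' := PI - atan M).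
  assert (Hfb' : c * b' + tan b' < 0).
  { unfold b'. rewrite tan_pi_minus, tan_atan by (apply Rgt_not_eq, cos_gt_0; lra).
    assert (c * (PI - atan M) < c * PI) by (apply Rmult_lt_compat_l; lra).
    lra. }
  destruct (IVT_interv (fun z => c * z + tan z) b' b) as [z [Hz Hfz]];
    [| unfold b'; lra | exact Hfb' | exact Hgt |].
  - intros z Hz. apply continuity_pt_plus.
    + apply continuity_pt_mult; [apply continuity_pt_const; now intros ? ?|apply continuity_pt_id].
    + apply continuity_pt_div; [apply continuity_sin | apply continuity_cos |].
      apply Hcos. unfold b' in Hz. lra.
  - apply (Hmin z); [unfold b' in Hz; lra | apply Hcos; unfold b' in Hz; lra | exact Hfz].
Qed.

Section Shooting.
Variables c alpha : R.
Hypothesis c_pos : 0 < c.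
Hypothesis alpha_gt_1 : 1 < alpha.

Definition g (s : R) := s * (alpha - 1 - s) / (alpha + 1 + s).

Definition G (s : R) :=
  2 * alpha * s - s * s / 2 - 2 * alpha * (alpha + 1) * ln (1 + s / (alpha + 1)).

Definition Gtop := G (alpha - 1).

Definition km (m : R) := (alpha - 1 - m) / (alpha + 1 + m).

Definition kap := km 0.

Lemma G_deriv s : -(alpha + 1) < s -> derivable_pt_lim G s (g s).
Proof.
  intros Hs. apply is_derive_Reals. unfold G, g. auto_derive.
  - apply Rplus_lt_reg_r with (-1). ring_simplify. apply Rlt_div_r; lra.
  - field; lra.
Qed.

Lemma G_0 : G 0 = 0.
Proof. unfold G. replace (1 + 0 / (alpha + 1)) with 1 by (field; lra). rewrite ln_1. field. Qed.

Lemma g_pos s : 0 < s < alpha - 1 -> 0 < g s.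
Proof. intros Hs. unfold g. apply Rdiv_lt_0_compat; nra. Qed.

Let G_deriv_top x : 0 <= x <= alpha - 1 -> derivable_pt_lim G x (g x).
Proof. intros Hx. apply G_deriv. lra. Qed.

Lemma G_lt x y : 0 <= x -> x < y -> y <= alpha - 1 -> G x < G y.
Proof. apply (incr_on_interval G g 0 (alpha - 1) G_deriv_top g_pos). Qed.

Lemma le_of_G_le x y : 0 <= x <= alpha - 1 -> 0 <= y <= alpha - 1 -> G x <= G y -> x <= y.
Proof. apply (le_of_image_le G g 0 (alpha - 1) G_deriv_top g_pos). Qed.

Lemma G_pos s : 0 < s <= alpha - 1 -> 0 < G s.
Proof. intros. rewrite <- G_0. apply G_lt; lra. Qed.

Lemma Gtop_pos : 0 < Gtop.
Proof. apply G_pos. lra. Qed.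

Definition Ginv := interval_inv G 0 (alpha - 1).

Lemma Ginv_spec y : 0 <= y <= Gtop -> 0 <= Ginv y <= alpha - 1 /\ G (Ginv y) = y.
Proof.
  intros Hy. apply (interval_inv_spec G g); [lra | exact G_deriv_top | now rewrite G_0].
Qed.

Lemma Ginv_G s : 0 <= s <= alpha - 1 -> Ginv (G s) = s.
Proof. apply (interval_inv_f G g); [lra | exact G_deriv_top | exact g_pos]. Qed.

Lemma continuity_pt_Ginv y : 0 < y < Gtop -> continuity_pt Ginv y.
Proof.
  intros Hy. apply (continuity_pt_interval_inv G g);
    [lra | exact G_deriv_top | exact g_pos | now rewrite G_0].
Qed.

Lemma derivable_pt_lim_Ginv y : 0 < y < Gtop -> derivable_pt_lim Ginv y (1 / g (Ginv y)).
Proof.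
  intros Hy. apply (derivable_pt_lim_interval_inv G g);
    [lra | exact G_deriv_top | exact g_pos | now rewrite G_0].
Qed.

Lemma Ginv_le y1 y2 : 0 <= y1 <= Gtop -> 0 <= y2 <= Gtop -> y1 <= y2 -> Ginv y1 <= Ginv y2.
Proof.
  intros. apply (interval_inv_le G g); [lra | exact G_deriv_top | exact g_pos | ..];
    rewrite ?G_0; auto.
Qed.

Lemma Ginv_pos y : 0 < y <= Gtop -> 0 < Ginv y.
Proof.
  intros Hy. destruct (Ginv_spec y) as [[[H1|H1] _] H3]; [lra|auto|].
  rewrite <- H1, G_0 in H3. lra.
Qed.

Lemma Ginv_lt_top y : 0 <= y < Gtop -> Ginv y < alpha - 1.
Proof.
  intros Hy. destruct (Ginv_spec y) as [[_ [H2|H2]] H3]; [lra|auto|].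
  rewrite H2 in H3. unfold Gtop in Hy. lra.
Qed.

Lemma km_bounds m : 0 <= m < alpha - 1 -> 0 < km m <= kap.
Proof.
  intros Hm. unfold kap, km. split; [apply Rdiv_lt_0_compat; lra|].
  apply Rle_div_l; [lra|].
  replace ((alpha - 1 - 0) / (alpha + 1 + 0) * (alpha + 1 + m))
    with ((alpha - 1) + (alpha - 1) / (alpha + 1) * m) by (field; lra).
  assert (0 <= (alpha - 1) / (alpha + 1) * m)
    by (apply Rmult_le_pos; [apply Rdiv_le_0_compat|]; lra).
  lra.
Qed.

Lemma kap_pos : 0 < kap.
Proof. unfold kap, km. apply Rdiv_lt_0_compat; lra. Qed.

Lemma G_le_kap_sq s : 0 <= s -> G s <= kap * (s * s) / 2.
Proof.
  intros Hs.
  enough (G s - G 0 <= kap * (s * s) / 2 - kap * (0 * 0) / 2) by (rewrite G_0 in H; lra).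
  apply (increment_le_of_deriv_le G (fun x => kap * (x * x) / 2) g (fun x => kap * x)); auto.
  - intros; apply G_deriv; lra.
  - intros x _. apply is_derive_Reals. auto_derive; auto. field.
  - intros x Hx. unfold g, kap, km.
    replace (x * (alpha - 1 - x) / (alpha + 1 + x)) with
      ((alpha - 1 - 0) / (alpha + 1 + 0) * x
       - 2 * alpha * x * x / ((alpha + 1) * (alpha + 1 + x))) by (field; lra).
    assert (0 <= 2 * alpha * x * x / ((alpha + 1) * (alpha + 1 + x)))
      by (apply Rdiv_le_0_compat; nra).
    lra.
Qed.

Lemma km_sq_le_G m s : 0 <= s <= m -> m <= alpha - 1 -> km m * (s * s) / 2 <= G s.
Proof.
  intros Hs Hm.
  enough (km m * (s * s) / 2 - km m * (0 * 0) / 2 <= G s - G 0) by (rewrite G_0 in H; lra).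
  apply (increment_le_of_deriv_le (fun x => km m * (x * x) / 2) G (fun x => km m * x) g);
    [lra | | |].
  - intros x _. apply is_derive_Reals. auto_derive; auto. field.
  - intros; apply G_deriv; lra.
  - intros x Hx. unfold g, km.
    replace (x * (alpha - 1 - x) / (alpha + 1 + x)) with
      ((alpha - 1 - m) / (alpha + 1 + m) * x
       + 2 * alpha * x * (m - x) / ((alpha + 1 + x) * (alpha + 1 + m))) by (field; lra).
    assert (0 <= 2 * alpha * x * (m - x) / ((alpha + 1 + x) * (alpha + 1 + m))).
    { apply Rdiv_le_0_compat; [|nra]. apply Rmult_le_pos; nra. }
    lra.
Qed.

Lemma Gtop_sub_G_ge a s : 0 < a <= s -> s <= alpha - 1 ->
  a * ((alpha - 1 - s) * (alpha - 1 - s)) / (4 * alpha) <= Gtop - G s.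
Proof.
  intros Ha Hs. unfold Gtop.
  pose (Q x := - a * ((alpha - 1 - x) * (alpha - 1 - x)) / (4 * alpha)).
  enough (Q (alpha - 1) - Q s <= G (alpha - 1) - G s) by (unfold Q in H; lra).
  apply (increment_le_of_deriv_le Q G (fun x => a * (alpha - 1 - x) / (2 * alpha)) g);
    [lra | | |].
  - intros x _. apply is_derive_Reals. unfold Q. auto_derive; auto. field. lra.
  - intros; apply G_deriv; lra.
  - intros x Hx. unfold g. apply (Rle_div_r _ _ (alpha + 1 + x)); [lra|].
    replace (a * (alpha - 1 - x) / (2 * alpha) * (alpha + 1 + x))
      with (a * (alpha + 1 + x) * (alpha - 1 - x) / (2 * alpha)) by (field; lra).
    apply (Rle_div_l _ _ (2 * alpha)); [lra|].
    assert (0 <= alpha - 1 - x) by lra.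
    assert (a * (alpha + 1 + x) <= x * (2 * alpha)) by nra.
    nra.
Qed.

Lemma G_increment_ge l r x y : 0 < l <= x -> x <= y -> y <= r -> r <= alpha - 1 ->
  l * (alpha - 1 - r) / (2 * alpha) * (y - x) <= G y - G x.
Proof.
  intros Hl Hxy Hyr Hr. set (K := l * (alpha - 1 - r) / (2 * alpha)).
  enough (K * y - K * x <= G y - G x) by lra.
  apply (increment_le_of_deriv_le (fun z => K * z) G (fun _ => K) g); [lra | | |].
  - intros z _. apply is_derive_Reals. auto_derive; auto. field.
  - intros; apply G_deriv; lra.
  - intros z Hz. unfold g, K. apply (Rle_div_r _ _ (alpha + 1 + z)); [lra|].
    replace (l * (alpha - 1 - r) / (2 * alpha) * (alpha + 1 + z))
      with (l * (alpha - 1 - r) * (alpha + 1 + z) / (2 * alpha)) by (field; lra).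
    apply (Rle_div_l _ _ (2 * alpha)); [lra|].
    assert (0 <= alpha - 1 - r) by lra.
    assert (l * (alpha - 1 - r) <= z * (alpha - 1 - z)) by nra.
    assert (0 <= l * (alpha - 1 - r)) by nra.
    nra.
Qed.

Lemma Ginv_lipschitz l r y1 y2 : 0 < l -> r < alpha - 1 ->
  0 <= y1 <= Gtop -> 0 <= y2 <= Gtop ->
  l <= Ginv y1 <= r -> l <= Ginv y2 <= r ->
  Rabs (Ginv y1 - Ginv y2) <= Rabs (y1 - y2) / (l * (alpha - 1 - r) / (2 * alpha)).
Proof.
  intros Hl Hr Hy1 Hy2 H1 H2.
  assert (Hm : 0 < l * (alpha - 1 - r) / (2 * alpha)) by (apply Rdiv_lt_0_compat; nra).
  destruct (Ginv_spec y1 Hy1) as [_ E1]. destruct (Ginv_spec y2 Hy2) as [_ E2].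
  apply Rle_div_r; auto.
  destruct (Rle_or_lt (Ginv y1) (Ginv y2)) as [Hle|Hlt].
  - pose proof (G_increment_ge l r (Ginv y1) (Ginv y2) ltac:(lra) Hle ltac:(lra) ltac:(lra)).
    rewrite E1, E2 in H. rewrite !Rabs_left1 by nra. nra.
  - pose proof (G_increment_ge l r (Ginv y2) (Ginv y1) ltac:(lra) ltac:(lra) ltac:(lra) ltac:(lra)).
    rewrite E1, E2 in H. rewrite !Rabs_right by nra. nra.
Qed.

Definition level (a : R) := G a + a * a / 2.

Lemma level_deriv a : -(alpha + 1) < a -> derivable_pt_lim level a (g a + a).
Proof.
  intros Ha. apply derivable_pt_lim_plus; [now apply G_deriv|].
  apply is_derive_Reals. auto_derive; auto. field.
Qed.

Lemma level_0 : level 0 = 0.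
Proof. unfold level. rewrite G_0. field. Qed.

Lemma level_increment_bounds x y : 0 <= x <= y -> y <= alpha - 1 ->
  0 <= level y - level x <= (kap + 1) * (alpha - 1) * (y - x).
Proof.
  intros Hx Hy.
  assert (Hd : forall z, x <= z <= y -> derivable_pt_lim level z (g z + z))
    by (intros; apply level_deriv; lra).
  assert (Hlin : forall k z, derivable_pt_lim (fun z => k * z) z k)
    by (intros; apply is_derive_Reals; auto_derive; auto; ring).
  split.
  - enough (0 * y - 0 * x <= level y - level x) by lra.
    apply (increment_le_of_deriv_le _ level (fun _ => 0) (fun z => g z + z));
      [lra | auto | auto |].
    intros z Hz. assert (0 < g z) by (apply g_pos; lra). lra.
  - set (K := (kap + 1) * (alpha - 1)).
    enough (level y - level x <= K * y - K * x) by lra.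
    apply (increment_le_of_deriv_le level _ (fun z => g z + z) (fun _ => K));
      [lra | auto | auto |].
    intros z Hz. unfold K, g, kap, km.
    assert (z * (alpha - 1 - z) / (alpha + 1 + z)
            <= (alpha - 1 - 0) / (alpha + 1 + 0) * (alpha - 1)).
    { apply (Rle_div_l _ _ (alpha + 1 + z)); [lra|].
      replace ((alpha - 1 - 0) / (alpha + 1 + 0) * (alpha - 1) * (alpha + 1 + z))
        with ((alpha - 1) * (alpha - 1) + (alpha - 1) * (alpha - 1) / (alpha + 1) * z)
        by (field; lra).
      assert (0 <= (alpha - 1) * (alpha - 1) / (alpha + 1) * z)
        by (apply Rmult_le_pos; [apply Rdiv_le_0_compat|]; nra).
      nra. }
    nra.
Qed.

Lemma level_le x y : 0 <= x <= y -> y <= alpha - 1 -> level x <= level y.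
Proof. intros. pose proof (level_increment_bounds x y). lra. Qed.

Lemma continuity_pt_level x : 0 <= x <= alpha - 1 -> continuity_pt level x.
Proof. intros. apply derivable_continuous_pt. exists (g x + x). apply level_deriv. lra. Qed.

Definition Phi (s : R) := c * (1 + s) / (s * (alpha - 1 - s)).

Definition Y (a t : R) := level a - a * a * (t * t) / 2.

Definition S (a t : R) := Ginv (Y a t).

Definition F (a t : R) := a * Phi (S a t).

Definition T (a : R) := RInt (F a) (-1) 1.

(* Below the value of [G] at the equilibrium [s = alpha - 1], so that [S a t] stays in
   (0, alpha - 1) for t in [-1, 1]. *)
Definition admissible (a : R) := 0 < a < alpha - 1 /\ level a < Gtop.

Lemma Phi_pos s : 0 < s < alpha - 1 -> 0 < Phi s.
Proof. intros. unfold Phi. apply Rdiv_lt_0_compat; [nra|]. apply Rmult_lt_0_compat; lra. Qed.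

Lemma continuity_pt_Phi s : 0 < s < alpha - 1 -> continuity_pt Phi s.
Proof.
  intros Hs. apply derivable_continuous_pt, ex_derive_Reals_0. unfold Phi. auto_derive.
  apply Rmult_integral_contrapositive; split; lra.
Qed.

Lemma Phi_le l r x : 0 < l <= x -> x <= r -> r < alpha - 1 ->
  Phi x <= c * (1 + r) / (l * (alpha - 1 - r)).
Proof.
  intros Hl Hx Hr. unfold Phi.
  apply (Rle_div_l _ _ (x * (alpha - 1 - x))); [apply Rmult_lt_0_compat; lra|].
  replace (c * (1 + r) / (l * (alpha - 1 - r)) * (x * (alpha - 1 - x)))
    with (c * (1 + r) * (x * (alpha - 1 - x)) / (l * (alpha - 1 - r))) by (field; lra).
  apply (Rle_div_r _ _ (l * (alpha - 1 - r))); [apply Rmult_lt_0_compat; lra|].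
  assert (c * (1 + x) <= c * (1 + r)) by nra.
  assert (l * (alpha - 1 - r) <= x * (alpha - 1 - x)) by nra.
  assert (0 <= c * (1 + x)) by nra. assert (0 <= l * (alpha - 1 - r)) by nra.
  nra.
Qed.

Lemma Phi_lipschitz l r x y : 0 < l <= x -> x <= r -> l <= y -> y <= r -> r < alpha - 1 ->
  Rabs (Phi x - Phi y) <=
    c * (3 * (alpha - 1) + (alpha - 1) * (alpha - 1))
      / (l * l * ((alpha - 1 - r) * (alpha - 1 - r))) * Rabs (x - y).
Proof.
  intros Hl Hx Hly Hy Hr.
  set (N := -(alpha - 1) + x + y + x * y).
  set (D := x * y * ((alpha - 1 - x) * (alpha - 1 - y))).
  set (Dmin := l * l * ((alpha - 1 - r) * (alpha - 1 - r))).
  assert (E : Phi x - Phi y = c * (x - y) * N / D) by (unfold Phi, N, D; field; repeat split; lra).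
  assert (HD : Dmin <= D).
  { unfold Dmin, D. apply Rmult_le_compat; nra. }
  assert (HDmin : 0 < Dmin) by (unfold Dmin; apply Rmult_lt_0_compat; nra).
  assert (HN : Rabs N <= 3 * (alpha - 1) + (alpha - 1) * (alpha - 1))
    by (unfold N; apply Rabs_le; split; nra).
  rewrite E. unfold Rdiv. rewrite !Rabs_mult, Rabs_inv, (Rabs_right c), (Rabs_right D) by lra.
  assert (/ D <= / Dmin) by (apply Rinv_le_contravar; auto).
  pose proof (Rabs_pos (x - y)). pose proof (Rabs_pos N).
  assert (0 < / D) by (apply Rinv_0_lt_compat; lra).
  assert (c * Rabs (x - y) * Rabs N
          <= c * Rabs (x - y) * (3 * (alpha - 1) + (alpha - 1) * (alpha - 1)))
    by (apply Rmult_le_compat_l; [apply Rmult_le_pos|]; lra).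
  apply Rle_trans with (c * Rabs (x - y) * (3 * (alpha - 1) + (alpha - 1) * (alpha - 1)) * / Dmin).
  - apply Rmult_le_compat; try lra. apply Rmult_le_pos; [apply Rmult_le_pos|]; lra.
  - right. field. lra.
Qed.

Lemma Y_deriv a t : derivable_pt_lim (Y a) t (- (a * a * t)).
Proof. apply is_derive_Reals. unfold Y. auto_derive; auto. field. Qed.

Lemma S_bounds a t : 0 < Y a t < Gtop -> 0 < S a t < alpha - 1.
Proof. intros H. unfold S. split; [apply Ginv_pos | apply Ginv_lt_top]; lra. Qed.

Lemma continuity_pt_S a t : 0 < Y a t < Gtop -> continuity_pt (S a) t.
Proof.
  intros H. apply (continuity_pt_comp (Y a) Ginv); [|now apply continuity_pt_Ginv].
  apply derivable_continuous_pt. exists (- (a * a * t)). apply Y_deriv.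
Qed.

Lemma S_deriv a t : 0 < Y a t < Gtop ->
  derivable_pt_lim (S a) t (1 / g (S a t) * - (a * a * t)).
Proof.
  intros H. apply (derivable_pt_lim_comp (Y a) Ginv); [apply Y_deriv|].
  now apply derivable_pt_lim_Ginv.
Qed.

Lemma continuity_pt_F a t : 0 < Y a t < Gtop -> continuity_pt (F a) t.
Proof.
  intros H. apply continuity_pt_mult; [apply continuity_pt_const; now intros ? ?|].
  apply (continuity_pt_comp (S a) Phi); [now apply continuity_pt_S|].
  apply continuity_pt_Phi. now apply S_bounds.
Qed.

Lemma Y_range a t : admissible a -> -1 <= t <= 1 -> G a <= Y a t <= level a.
Proof. intros [Ha _] Ht. unfold Y, level. assert (t * t <= 1) by nra. split; nra. Qed.

Lemma Y_pos a t : admissible a -> -1 <= t <= 1 -> 0 < Y a t < Gtop.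
Proof.
  intros Ha Ht. pose proof (Y_range a t Ha Ht).
  destruct Ha as [Ha Hl]. pose proof (G_pos a ltac:(lra)). lra.
Qed.

Lemma G_S a t : admissible a -> -1 <= t <= 1 -> G (S a t) = Y a t.
Proof. intros Ha Ht. pose proof (Y_pos a t Ha Ht). apply Ginv_spec. lra. Qed.

Lemma S_range a t : admissible a -> -1 <= t <= 1 ->
  a <= S a t <= Ginv (level a) /\ Ginv (level a) < alpha - 1.
Proof.
  intros Ha Ht. pose proof (Y_range a t Ha Ht). pose proof (Y_pos a t Ha Ht).
  destruct Ha as [Ha1 Ha2]. pose proof (G_pos a ltac:(lra)).
  assert (0 <= level a) by (rewrite <- level_0; apply level_le; lra).
  split; [split|].
  - rewrite <- (Ginv_G a) at 1 by lra. apply Ginv_le; lra.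
  - apply Ginv_le; lra.
  - apply Ginv_lt_top; lra.
Qed.

Lemma ex_RInt_F a : admissible a -> ex_RInt (F a) (-1) 1.
Proof.
  intros Ha. apply (@ex_RInt_continuous R_CompleteNormedModule). intros z Hz.
  rewrite Rmin_left, Rmax_right in Hz by lra.
  apply continuity_pt_filterlim, continuity_pt_F, Y_pos; auto.
Qed.

Lemma admissible_between a1 a2 a : admissible a1 -> admissible a2 -> a1 <= a <= a2 ->
  admissible a.
Proof.
  intros [H1 _] [H2 H2'] Ha. split; [lra|].
  apply Rle_lt_trans with (level a2); auto. apply level_le; lra.
Qed.

Lemma Y_lipschitz a2 a b t : 0 <= a <= a2 -> 0 <= b <= a2 -> a2 <= alpha - 1 ->
  -1 <= t <= 1 ->
  Rabs (Y a t - Y b t) <= ((kap + 1) * (alpha - 1) + a2) * Rabs (a - b).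
Proof.
  intros Ha Hb Ha2 Ht.
  replace (Y a t - Y b t) with ((level a - level b) + (b - a) * ((a + b) * (t * t) / 2))
    by (unfold Y; field).
  eapply Rle_trans; [apply Rabs_triang|].
  assert (Rabs (level a - level b) <= (kap + 1) * (alpha - 1) * Rabs (a - b)).
  { destruct (Rle_or_lt a b).
    - pose proof (level_increment_bounds a b). rewrite !Rabs_left1 by lra. nra.
    - pose proof (level_increment_bounds b a). rewrite !Rabs_right by lra. nra. }
  assert (Rabs ((b - a) * ((a + b) * (t * t) / 2)) <= a2 * Rabs (a - b)).
  { assert (0 <= t * t <= 1) by nra.
    assert (0 <= (a + b) * (t * t) / 2 <= a2) by (split; nra).
    rewrite Rabs_mult, (Rabs_right ((a + b) * (t * t) / 2)), <- Rabs_Ropp by lra.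
    replace (- (b - a)) with (a - b) by ring.
    pose proof (Rabs_pos (a - b)). nra. }
  lra.
Qed.

Lemma S_between a1 a2 a t : admissible a1 -> admissible a2 -> a1 <= a <= a2 ->
  -1 <= t <= 1 -> a1 <= S a t <= Ginv (level a2).
Proof.
  intros A1 A2 Ha Ht.
  assert (A : admissible a) by (apply (admissible_between a1 a2); auto).
  destruct (S_range a t A Ht) as [[H1 H2] _]. split; [lra|].
  destruct A as [[Ha0 _] _]. destruct A2 as [[_ Ha2] HA2].
  assert (0 <= level a) by (rewrite <- level_0; apply level_le; lra).
  assert (level a <= level a2) by (apply level_le; lra).
  apply Rle_trans with (Ginv (level a)); auto. apply Ginv_le; lra.
Qed.

Lemma S_lipschitz a1 a2 : admissible a1 -> admissible a2 -> exists K, 0 <= K /\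
  forall a b t, a1 <= a <= a2 -> a1 <= b <= a2 -> -1 <= t <= 1 ->
    Rabs (S a t - S b t) <= K * Rabs (a - b).
Proof.
  intros A1 A2.
  destruct (S_range a2 0 A2) as [_ Hs2]; [lra|].
  pose proof A1 as [[Ha1 _] _]. pose proof A2 as [[Ha20 Ha2] _].
  set (s2 := Ginv (level a2)) in *.
  set (mg := a1 * (alpha - 1 - s2) / (2 * alpha)).
  set (LY := (kap + 1) * (alpha - 1) + a2).
  assert (Hmg : 0 < mg) by (apply Rdiv_lt_0_compat; [apply Rmult_lt_0_compat|]; lra).
  assert (HLY : 0 <= LY) by (pose proof kap_pos; unfold LY; nra).
  exists (LY / mg). split; [apply Rdiv_le_0_compat; lra|].
  intros a b t Ha Hb Ht.
  assert (Aa : admissible a) by (apply (admissible_between a1 a2); auto).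
  assert (Ab : admissible b) by (apply (admissible_between a1 a2); auto).
  assert (a1 <= S a t <= s2) by (apply S_between; auto).
  assert (a1 <= S b t <= s2) by (apply S_between; auto).
  pose proof (Y_pos a t Aa Ht). pose proof (Y_pos b t Ab Ht).
  eapply Rle_trans; [apply (Ginv_lipschitz a1 s2); unfold S in *; lra|].
  apply (Rle_div_l _ _ mg); [lra|].
  replace (LY / mg * Rabs (a - b) * mg) with (LY * Rabs (a - b)) by (field; lra).
  apply Y_lipschitz; lra.
Qed.

Lemma F_lipschitz a1 a2 : admissible a1 -> admissible a2 -> exists K, 0 <= K /\
  forall a b t, a1 <= a <= a2 -> a1 <= b <= a2 -> -1 <= t <= 1 ->
    Rabs (F a t - F b t) <= K * Rabs (a - b).
Proof.
  intros A1 A2. destruct (S_lipschitz a1 a2 A1 A2) as [KS [HKS HS]].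
  destruct (S_range a2 0 A2) as [[Hs2a Hs2b] Hs2]; [lra|].
  pose proof A1 as [[Ha1 _] _]. pose proof A2 as [[Ha20 Ha2] _].
  set (s2 := Ginv (level a2)) in *.
  set (PM := c * (1 + s2) / (a1 * (alpha - 1 - s2))).
  set (LP := c * (3 * (alpha - 1) + (alpha - 1) * (alpha - 1))
               / (a1 * a1 * ((alpha - 1 - s2) * (alpha - 1 - s2)))).
  assert (HLP : 0 <= LP).
  { apply Rdiv_le_0_compat; [apply Rmult_le_pos; nra|]. repeat apply Rmult_lt_0_compat; lra. }
  assert (HPM : 0 <= PM) by (apply Rdiv_le_0_compat; [|apply Rmult_lt_0_compat]; nra).
  exists (PM + a2 * (LP * KS)). split; [assert (0 <= LP * KS) by nra; nra|].
  intros a b t Ha Hb Ht.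
  assert (a1 <= S a t <= s2) by (apply S_between; auto).
  assert (a1 <= S b t <= s2) by (apply S_between; auto).
  assert (Hdiff : Rabs (Phi (S a t) - Phi (S b t)) <= LP * (KS * Rabs (a - b))).
  { eapply Rle_trans; [apply (Phi_lipschitz a1 s2); lra|].
    apply Rmult_le_compat_l; auto. }
  assert (PSa : 0 < Phi (S a t) <= PM) by (split; [apply Phi_pos | apply Phi_le]; lra).
  unfold F.
  replace (a * Phi (S a t) - b * Phi (S b t))
    with ((a - b) * Phi (S a t) + b * (Phi (S a t) - Phi (S b t))) by ring.
  eapply Rle_trans; [apply Rabs_triang|]. rewrite !Rabs_mult.
  rewrite (Rabs_right (Phi _)), (Rabs_right b) by lra.
  pose proof (Rabs_pos (a - b)). pose proof (Rabs_pos (Phi (S a t) - Phi (S b t))).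
  assert (b * Rabs (Phi (S a t) - Phi (S b t)) <= a2 * (LP * (KS * Rabs (a - b))))
    by (apply Rmult_le_compat; lra).
  nra.
Qed.

Lemma T_lipschitz a1 a2 : admissible a1 -> admissible a2 -> exists K, 0 <= K /\
  forall a b, a1 <= a <= a2 -> a1 <= b <= a2 -> Rabs (T a - T b) <= K * Rabs (a - b).
Proof.
  intros A1 A2. destruct (F_lipschitz a1 a2 A1 A2) as [K [HK HF]].
  exists (2 * K). split; [lra|]. intros a b Ha Hb.
  assert (Aa : admissible a) by (apply (admissible_between a1 a2); auto).
  assert (Ab : admissible b) by (apply (admissible_between a1 a2); auto).
  unfold T. rewrite <- (RInt_minus (V := R_CompleteNormedModule)) by (apply ex_RInt_F; auto).
  eapply Rle_trans.
  - apply abs_RInt_le_const; [lra| |].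
    + apply (ex_RInt_minus (V := R_CompleteNormedModule)); apply ex_RInt_F; auto.
    + intros t Ht. apply HF; auto.
  - right. ring.
Qed.

Lemma exists_T_eq_1 a1 a2 : admissible a1 -> admissible a2 -> a1 < a2 -> T a1 < 1 -> 1 < T a2 ->
  exists a, admissible a /\ T a = 1.
Proof.
  intros A1 A2 H12 HT1 HT2.
  destruct (T_lipschitz a1 a2 A1 A2) as [K [HK HL]].
  (* [T] is only controlled on [a1, a2]; clamping makes it continuous on R. *)
  set (clamp := fun x => Rmax a1 (Rmin x a2)).
  assert (Hcl : forall x, a1 <= clamp x <= a2)
    by (intros x; unfold clamp, Rmax, Rmin; repeat destruct Rle_dec; lra).
  assert (Hid : forall x, a1 <= x <= a2 -> clamp x = x)
    by (intros x Hx; unfold clamp, Rmax, Rmin; repeat destruct Rle_dec; lra).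
  set (f := fun x => T (clamp x) - 1).
  assert (Hc : continuity f).
  { apply (lipschitz_continuity f K HK). intros x y. unfold f.
    replace (T (clamp x) - 1 - (T (clamp y) - 1)) with (T (clamp x) - T (clamp y)) by ring.
    eapply Rle_trans; [apply HL; apply Hcl|].
    apply Rmult_le_compat_l; auto. apply clamp_lipschitz; lra. }
  destruct (IVT f a1 a2 Hc H12) as [z [Hz Hfz]];
    unfold f in *; rewrite ?Hid in * by lra; try lra.
  exists z. split; [apply (admissible_between a1 a2)|]; auto; lra.
Qed.

(* The time map computed with the quadratic bounds [km m * s^2 / 2 <= G s <= kap * s^2 / 2]
   on [0, m] in place of [G]; [B 0] is the time map of the linearized system. *)
Definition B (m : R) :=
  2 * (c * (1 + m) / (alpha - 1 - m) * sqrt kap) * asin (1 / sqrt (km m + 1)).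

Lemma level_small m a : 0 < m < alpha - 1 -> 0 < a ->
  a * a * (kap + 1) <= km m * (m * m) -> a <= m /\ level a <= G m.
Proof.
  intros Hm Ha Hcond.
  destruct (km_bounds m) as [Hk1 Hk2]; [lra|].
  assert (a * a <= m * m) by nra.
  pose proof (G_le_kap_sq a ltac:(lra)). pose proof (km_sq_le_G m m ltac:(lra) ltac:(lra)).
  unfold level. split; nra.
Qed.

Lemma admissible_small m a : 0 < m < alpha - 1 -> 0 < a ->
  a * a * (kap + 1) <= km m * (m * m) -> admissible a.
Proof.
  intros Hm Ha Hcond. destruct (level_small m a Hm Ha Hcond).
  assert (G m < Gtop) by (apply G_lt; lra).
  split; lra.
Qed.

Lemma Phi_mul_le s m : 0 < s <= m -> m < alpha - 1 ->
  Phi s * s <= c * (1 + m) / (alpha - 1 - m).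
Proof.
  intros Hs Hm. unfold Phi.
  replace (c * (1 + s) / (s * (alpha - 1 - s)) * s)
    with (c * (1 + s) / (alpha - 1 - s)) by (field; lra).
  apply (Rle_div_l _ _ (alpha - 1 - s)); [lra|].
  replace (c * (1 + m) / (alpha - 1 - m) * (alpha - 1 - s))
    with (c * ((1 + m) * (alpha - 1 - s)) / (alpha - 1 - m)) by (field; lra).
  apply (Rle_div_r _ _ (alpha - 1 - m)); [lra|].
  assert ((1 + s) * (alpha - 1 - m) <= (1 + m) * (alpha - 1 - s)) by nra.
  rewrite Rmult_assoc. apply Rmult_le_compat_l; lra.
Qed.

Lemma F_le_small m a t : 0 < m < alpha - 1 -> 0 < a ->
  a * a * (kap + 1) <= km m * (m * m) -> -1 <= t <= 1 ->
  F a t <= c * (1 + m) / (alpha - 1 - m) * sqrt kap / sqrt (km m + 1 - t * t).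
Proof.
  intros Hm Ha Hcond Ht.
  destruct (level_small m a Hm Ha Hcond) as [Ham Hlev].
  pose proof (admissible_small m a Hm Ha Hcond) as A.
  destruct (km_bounds m) as [Hk1 Hk2]; [lra|].
  destruct (S_range a t A Ht) as [[HS1 _] _].
  pose proof (G_S a t A Ht) as EGS. pose proof (Y_range a t A Ht).
  pose proof (S_bounds a t (Y_pos a t A Ht)) as [HS0 HS3].
  set (s := S a t) in *.
  assert (Hsm : s <= m) by (apply le_of_G_le; lra).
  set (K := km m + 1 - t * t).
  assert (HK : 0 < K) by (unfold K; nra).
  assert (Hlow : a * a * K <= kap * (s * s)).
  { pose proof (G_le_kap_sq s ltac:(lra)). pose proof (km_sq_le_G m a ltac:(lra) ltac:(lra)).
    unfold Y, level in EGS. unfold K. nra. }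
  assert (Ekap : sqrt kap * sqrt kap = kap) by (apply sqrt_sqrt; lra).
  assert (EK : sqrt K * sqrt K = K) by (apply sqrt_sqrt; lra).
  assert (0 < sqrt K) by (apply sqrt_lt_R0; lra).
  assert (0 < sqrt kap) by (apply sqrt_lt_R0; lra).
  assert (Haq : a * sqrt K <= s * sqrt kap).
  { assert (a * sqrt K * (a * sqrt K) <= s * sqrt kap * (s * sqrt kap)).
    { replace (a * sqrt K * (a * sqrt K)) with (a * a * (sqrt K * sqrt K)) by ring.
      replace (s * sqrt kap * (s * sqrt kap)) with (s * s * (sqrt kap * sqrt kap)) by ring.
      rewrite EK, Ekap. lra. }
    assert (0 < s * sqrt kap) by (apply Rmult_lt_0_compat; lra).
    nra. }
  pose proof (Phi_mul_le s m ltac:(lra) ltac:(lra)) as HPhi.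
  assert (HP0 : 0 < Phi s) by (apply Phi_pos; lra).
  unfold F. fold s. apply (Rle_div_r _ _ (sqrt K)); [lra|].
  apply Rle_trans with (Phi s * s * sqrt kap); [|apply Rmult_le_compat_r; lra].
  replace (a * Phi s * sqrt K) with (Phi s * (a * sqrt K)) by ring.
  replace (Phi s * s * sqrt kap) with (Phi s * (s * sqrt kap)) by ring.
  apply Rmult_le_compat_l; lra.
Qed.

Lemma T_le_B m a : 0 < m < alpha - 1 -> 0 < a ->
  a * a * (kap + 1) <= km m * (m * m) -> T a <= B m.
Proof.
  intros Hm Ha Hcond.
  destruct (km_bounds m) as [Hk1 _]; [lra|].
  pose proof (is_RInt_inv_sqrt_sub_sq (c * (1 + m) / (alpha - 1 - m) * sqrt kap)
                (km m + 1) ltac:(lra)) as HI.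
  unfold B. rewrite <- (is_RInt_unique _ _ _ _ HI).
  apply RInt_le; [lra | apply ex_RInt_F, (admissible_small m); auto | eexists; exact HI |].
  intros t Ht. apply F_le_small; auto; lra.
Qed.

Lemma continuity_pt_B : continuity_pt B 0.
Proof.
  destruct (km_bounds 0) as [Hk _]; [lra|].
  assert (H1 : 1 < sqrt (km 0 + 1))
    by (apply Rle_lt_trans with (sqrt 1); [rewrite sqrt_1 | apply sqrt_lt_1]; lra).
  apply continuity_pt_mult.
  - apply derivable_continuous_pt, ex_derive_Reals_0. auto_derive. lra.
  - apply (continuity_pt_comp (fun m => 1 / sqrt (km m + 1)) asin).
    + apply derivable_continuous_pt, ex_derive_Reals_0. unfold km. auto_derive.
      assert (E : (alpha - 1 + - 0) * / (alpha + 1 + 0) = km 0) by (unfold km; field; lra).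
      rewrite E.
      repeat split; lra.
    + apply derivable_continuous_pt, derivable_pt_asin.
      assert (0 < 1 / sqrt (km 0 + 1) < 1)
        by (split; [apply Rdiv_lt_0_compat | apply Rlt_div_l]; lra).
      lra.
Qed.

Lemma T_lt_1_small : B 0 < 1 -> exists r, 0 < r /\ forall a, 0 < a <= r -> admissible a /\ T a < 1.
Proof.
  intros HB. destruct (continuity_pt_lt_near B 0 1 continuity_pt_B HB) as [d [Hd HBd]].
  set (m := Rmin (d / 2) ((alpha - 1) / 2)).
  assert (Hm : 0 < m < alpha - 1) by (unfold m, Rmin; destruct Rle_dec; lra).
  assert (HBm : B m < 1)
    by (apply HBd; rewrite Rminus_0_r, Rabs_right; unfold m, Rmin in *; destruct Rle_dec; lra).
  destruct (km_bounds m) as [Hk1 Hk2]; [lra|].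
  exists (m * km m / (kap + 1)). split; [apply Rdiv_lt_0_compat; nra|].
  intros a Ha.
  assert (Hcond : a * a * (kap + 1) <= km m * (m * m)).
  { destruct Ha as [Ha0 Ha]. apply Rle_div_r in Ha; [|lra].
    assert (m * km m / (kap + 1) <= m)
      by (apply (Rle_div_l _ _ (kap + 1)); [lra|]; nra).
    assert (a * (a * (kap + 1)) <= a * (m * km m)) by (apply Rmult_le_compat_l; lra).
    assert (a * (m * km m) <= m * (m * km m)) by (apply Rmult_le_compat_r; nra).
    nra. }
  split; [apply (admissible_small m)|]; try lra.
  pose proof (T_le_B m a Hm ltac:(lra) Hcond). lra.
Qed.

Lemma F_ge_near_top a k t : admissible a -> 0 < k -> Gtop - level a = a * a * k / 2 ->
  -1 <= t <= 1 -> a * c / (sqrt (2 * alpha * (alpha - 1)) * sqrt (t * t + k)) <= F a t.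
Proof.
  intros A Hk Hgap Ht. pose proof A as [[Ha0 Ha1] _].
  destruct (S_range a t A Ht) as [[HS1 _] _].
  pose proof (G_S a t A Ht) as EGS.
  pose proof (S_bounds a t (Y_pos a t A Ht)) as [HS0 HS3].
  set (s := S a t) in *. set (y := alpha - 1 - s).
  set (Q := sqrt (2 * alpha * (alpha - 1))).
  assert (HQ : 0 < Q) by (apply sqrt_lt_R0; nra).
  assert (EQ : Q * Q = 2 * alpha * (alpha - 1)) by (apply sqrt_sqrt; nra).
  assert (Hq : 0 < sqrt (t * t + k)) by (apply sqrt_lt_R0; nra).
  assert (Eq : sqrt (t * t + k) * sqrt (t * t + k) = t * t + k) by (apply sqrt_sqrt; nra).
  assert (Hyy : a * (y * y) / (4 * alpha) <= a * a * (t * t + k) / 2).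
  { pose proof (Gtop_sub_G_ge a s ltac:(lra) ltac:(lra)). rewrite EGS in H.
    unfold Y in H. fold y in H. nra. }
  assert (Hyy' : y * y <= 2 * alpha * a * (t * t + k)).
  { apply (Rmult_le_reg_r (a / (4 * alpha))); [apply Rdiv_lt_0_compat; lra|].
    replace (y * y * (a / (4 * alpha))) with (a * (y * y) / (4 * alpha)) by (field; lra).
    replace (2 * alpha * a * (t * t + k) * (a / (4 * alpha)))
      with (a * a * (t * t + k) / 2) by (field; lra).
    exact Hyy. }
  assert (HyQ : y <= Q * sqrt (t * t + k)).
  { assert (y * y <= Q * sqrt (t * t + k) * (Q * sqrt (t * t + k))).
    { replace (Q * sqrt (t * t + k) * (Q * sqrt (t * t + k)))
        with (Q * Q * (sqrt (t * t + k) * sqrt (t * t + k))) by ring.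
      rewrite EQ, Eq. nra. }
    assert (0 < Q * sqrt (t * t + k)) by (apply Rmult_lt_0_compat; lra).
    nra. }
  assert (HPy : c <= Phi s * y).
  { unfold Phi, y. replace (c * (1 + s) / (s * (alpha - 1 - s)) * (alpha - 1 - s))
      with (c * (1 + s) / s) by (field; lra).
    apply (Rle_div_r _ _ s); lra. }
  assert (HP0 : 0 < Phi s) by (apply Phi_pos; lra).
  apply (Rle_div_l _ _ (Q * sqrt (t * t + k))); [apply Rmult_lt_0_compat; lra|].
  unfold F. fold s.
  assert (c <= Phi s * (Q * sqrt (t * t + k)))
    by (apply Rle_trans with (Phi s * y); [|apply Rmult_le_compat_l]; lra).
  nra.
Qed.

Lemma T_ge_log a k : admissible a -> 0 < k -> k < 1 -> Gtop - level a = a * a * k / 2 ->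
  a * c / sqrt (2 * alpha * (alpha - 1)) * ln (/ k) <= T a.
Proof.
  intros A Hk Hk1 Hgap. pose proof A as [[Ha0 _] _].
  set (C := a * c / sqrt (2 * alpha * (alpha - 1))).
  assert (HC : 0 < C) by (apply Rdiv_lt_0_compat; [nra | apply sqrt_lt_R0; nra]).
  pose proof (is_RInt_inv_sqrt_sq_add C k Hk) as HI.
  set (r := sqrt (1 + k)) in HI.
  assert (Hr : 1 < r)
    by (apply Rle_lt_trans with (sqrt 1); [rewrite sqrt_1 | apply sqrt_lt_1]; lra).
  assert (Er : r * r = 1 + k) by (apply sqrt_sqrt; lra).
  apply Rle_trans with (C * (ln (1 + r) - ln (-1 + r))).
  - rewrite <- ln_div by lra. apply Rmult_le_compat_l; [lra|].
    apply ln_le; [apply Rinv_0_lt_compat; lra|].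
    apply (Rle_div_r _ _ (-1 + r)); [lra|].
    replace (/ k * (-1 + r)) with (1 / (r + 1))
      by (replace k with ((r - 1) * (r + 1)) by nra; field; lra).
    apply (Rle_div_l _ _ (r + 1)); nra.
  - rewrite <- (is_RInt_unique _ _ _ _ HI).
    apply RInt_le; [lra | eexists; exact HI | apply ex_RInt_F; auto |].
    intros t Ht. unfold C. replace (a * c / sqrt (2 * alpha * (alpha - 1)) / sqrt (t * t + k))
      with (a * c / (sqrt (2 * alpha * (alpha - 1)) * sqrt (t * t + k))).
    + apply F_ge_near_top; auto; lra.
    + field. split; apply Rgt_not_eq, sqrt_lt_R0; nra.
Qed.

Lemma level_near_top eps : 0 < eps <= Gtop / 2 ->
  exists a, admissible a /\ level a = Gtop - eps /\ Gtop / (kap + 1) <= a * a.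
Proof.
  intros Heps. pose proof kap_pos.
  assert (Htop : level (alpha - 1) = Gtop + (alpha - 1) * (alpha - 1) / 2)
    by (unfold level, Gtop; ring).
  assert (Hrange : level 0 <= Gtop - eps <= level (alpha - 1))
    by (rewrite level_0, Htop; split; nra).
  destruct (f_interv_is_interv level 0 (alpha - 1) (Gtop - eps) ltac:(lra) Hrange
              continuity_pt_level) as [a [Ha Hla]].
  assert (Ha0 : 0 < a) by (destruct Ha as [[Ha0|Ha0] _]; [|rewrite <- Ha0, level_0 in Hla]; lra).
  assert (Ha1 : a < alpha - 1) by (destruct Ha as [_ [Ha1|Ha1]]; [|rewrite Ha1, Htop in Hla]; nra).
  exists a. split; [split; lra|]. split; [exact Hla|].
  pose proof (G_le_kap_sq a ltac:(lra)). unfold level in Hla.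
  apply (Rle_div_l _ _ (kap + 1)); lra.
Qed.

Lemma T_gt_1_large : exists a, admissible a /\ 1 < T a.
Proof.
  pose proof Gtop_pos as HG. pose proof kap_pos as Hkap.
  set (al := sqrt (Gtop / (kap + 1))).
  assert (Hal : 0 < al) by (apply sqrt_lt_R0, Rdiv_lt_0_compat; lra).
  assert (Eal : al * al = Gtop / (kap + 1)) by (apply sqrt_sqrt, Rdiv_le_0_compat; lra).
  set (Q := sqrt (2 * alpha * (alpha - 1))).
  assert (HQ : 0 < Q) by (apply sqrt_lt_R0; nra).
  set (M := Q / (al * c)).
  assert (HM : 0 < M) by (apply Rdiv_lt_0_compat; nra).
  pose proof (exp_pos (- M)) as Hexp.
  set (eps := Rmin (Gtop / 2) (al * al * exp (- M) / 4)).
  assert (Heps : 0 < eps)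
    by (apply Rmin_pos; [|apply Rdiv_lt_0_compat; [repeat apply Rmult_lt_0_compat|]]; lra).
  assert (Heps1 : eps <= Gtop / 2) by apply Rmin_l.
  assert (Heps2 : eps <= al * al * exp (- M) / 4) by apply Rmin_r.
  destruct (level_near_top eps ltac:(lra)) as [a [A [Hla Hala]]].
  rewrite <- Eal in Hala. pose proof A as [[Ha0 _] _].
  set (k := 2 * eps / (a * a)).
  assert (Hk : 0 < k) by (apply Rdiv_lt_0_compat; nra).
  assert (Hk2 : k <= exp (- M) / 2) by (apply (Rle_div_l _ _ (a * a)); nra).
  assert (Hk1 : k < 1)
    by (assert (exp (- M) < exp 0) by (apply exp_increasing; lra); rewrite exp_0 in *; lra).
  assert (HlnM : M < ln (/ k)).
  { rewrite <- (ln_exp M). apply ln_increasing; [apply exp_pos|].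
    apply (Rmult_lt_reg_r k); [lra|]. rewrite Rinv_l by lra.
    assert (exp M * exp (- M) = 1) by (rewrite <- exp_plus, Rplus_opp_r; apply exp_0).
    pose proof (exp_pos M). nra. }
  exists a. split; auto.
  apply Rlt_le_trans with (a * c / Q * ln (/ k)).
  - assert (al * c / Q * M = 1) by (unfold M; field; split; lra).
    assert (al * c / Q <= a * c / Q)
      by (apply Rmult_le_compat_r; [apply Rlt_le, Rinv_0_lt_compat | apply Rmult_le_compat_r];
          nra).
    assert (0 < al * c / Q) by (apply Rdiv_lt_0_compat; nra).
    nra.
  - apply T_ge_log; auto. rewrite Hla. unfold k. field. lra.
Qed.

Definition lin_angle := 2 * asin (1 / sqrt (kap + 1)).

Lemma lin_angle_spec : PI / 2 < lin_angle < PI /\ cos lin_angle = -1 / alpha.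
Proof.
  pose proof kap_pos. pose proof PI_RGT_0.
  set (w := 1 / sqrt (kap + 1)).
  assert (Hk : kap + 1 = 2 * alpha / (alpha + 1)) by (unfold kap, km; field; lra).
  assert (Hsq : 0 < sqrt (kap + 1)) by (apply sqrt_lt_R0; lra).
  assert (Esq : sqrt (kap + 1) * sqrt (kap + 1) = kap + 1) by (apply sqrt_sqrt; lra).
  assert (Hww : w * w = (alpha + 1) / (2 * alpha)).
  { unfold w. replace (1 / sqrt (kap + 1) * (1 / sqrt (kap + 1)))
      with (1 / (sqrt (kap + 1) * sqrt (kap + 1))) by (field; lra).
    rewrite Esq, Hk. field. lra. }
  assert (Hw0 : 0 < w) by (apply Rdiv_lt_0_compat; lra).
  assert (Hw1 : w < 1)
    by (assert (w * w < 1) by (rewrite Hww; apply Rlt_div_l; lra); nra).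
  destruct (asin_bound_lt w ltac:(lra)) as [Hth1 Hth2].
  assert (Hth0 : 0 < asin w).
  { destruct (Rlt_or_le 0 (asin w)) as [|Hle]; auto.
    assert (Hs : 0 <= sin (- asin w)) by (apply sin_ge_0; lra).
    rewrite sin_neg, sin_asin in Hs by lra. lra. }
  assert (Hcos : cos lin_angle = -1 / alpha).
  { unfold lin_angle. fold w. rewrite cos_2a_sin, sin_asin by lra.
    replace (2 * w * w) with (2 * (w * w)) by ring. rewrite Hww. field. lra. }
  assert (Hb : 0 < lin_angle < PI) by (unfold lin_angle; fold w; lra).
  split; [split|]; try lra.
  destruct (Rle_or_lt lin_angle (PI / 2)) as [Hle|]; auto.
  assert (0 <= cos lin_angle) by (apply cos_ge_0; lra).
  assert (0 < 1 / alpha) by (apply Rdiv_lt_0_compat; lra).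
  rewrite Hcos in *. replace (-1 / alpha) with (- (1 / alpha)) in * by (field; lra). lra.
Qed.

Lemma sin_lin_angle : alpha * sin lin_angle * sqrt kap = alpha - 1.
Proof.
  destruct lin_angle_spec as [Hb Hcos]. pose proof kap_pos.
  assert (Hsin : 0 < sin lin_angle) by (apply sin_gt_0; lra).
  assert (Hsin2 : sin lin_angle * sin lin_angle = 1 - 1 / (alpha * alpha)).
  { pose proof (sin2_cos2 lin_angle) as E. unfold Rsqr in E. rewrite Hcos in E.
    replace (-1 / alpha * (-1 / alpha)) with (1 / (alpha * alpha)) in E by (field; lra).
    lra. }
  assert (Ek : sqrt kap * sqrt kap = kap) by (apply sqrt_sqrt; lra).
  assert (0 < sqrt kap) by (apply sqrt_lt_R0; lra).
  assert (E : alpha * sin lin_angle * sqrt kap * (alpha * sin lin_angle * sqrt kap)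
              = (alpha - 1) * (alpha - 1)).
  { replace (alpha * sin lin_angle * sqrt kap * (alpha * sin lin_angle * sqrt kap))
      with (alpha * alpha * (sin lin_angle * sin lin_angle) * (sqrt kap * sqrt kap)) by ring.
    rewrite Ek, Hsin2. unfold kap, km. field. lra. }
  assert (0 < alpha * sin lin_angle * sqrt kap) by (repeat apply Rmult_lt_0_compat; lra).
  nra.
Qed.

Lemma B_0 : B 0 = c * lin_angle / (alpha * sin lin_angle).
Proof.
  destruct lin_angle_spec as [Hb _]. pose proof sin_lin_angle as Hsk.
  assert (0 < sin lin_angle) by (apply sin_gt_0; lra).
  pose proof kap_pos. assert (0 < sqrt kap) by (apply sqrt_lt_R0; lra).
  unfold B. replace (km 0) with kap by reflexivity.
  replace (asin (1 / sqrt (kap + 1))) with (lin_angle / 2) by (unfold lin_angle; field).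
  replace (alpha - 1 - 0) with (alpha * sin lin_angle * sqrt kap) by lra.
  field. repeat split; lra.
Qed.

Lemma B0_lt_1 b0 : smallest_pos_root c b0 -> PI / 2 < b0 < PI -> 1 / Rabs (cos b0) < alpha ->
  B 0 < 1.
Proof.
  intros Hroot Hb0 Hal.
  destruct lin_angle_spec as [Hb Hcos].
  assert (Hc0 : cos b0 < 0) by (apply cos_lt_0; lra).
  rewrite Rabs_left in Hal by lra. apply Rlt_div_l in Hal; [|lra].
  assert (Hcb0 : cos b0 < cos lin_angle).
  { rewrite Hcos. apply (Rmult_lt_reg_r alpha); [lra|].
    replace (-1 / alpha * alpha) with (-1) by (field; lra). nra. }
  assert (Hlt : lin_angle < b0).
  { destruct (Rlt_or_le lin_angle b0) as [|Hle]; auto.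
    assert (cos lin_angle <= cos b0) by (apply cos_decr_1; lra). lra. }
  assert (Hsin : 0 < sin lin_angle) by (apply sin_gt_0; lra).
  pose proof (tan_root_sign_before c b0 lin_angle c_pos Hroot ltac:(lra) ltac:(lra)) as Hneg.
  assert (Htan : tan lin_angle = - alpha * sin lin_angle)
    by (unfold tan; rewrite Hcos; field; lra).
  rewrite B_0. apply Rlt_div_l; [nra|]. lra.
Qed.

Lemma S_unit a t : 0 <= a <= alpha - 1 -> t * t = 1 -> S a t = a.
Proof.
  intros Ha Ht. unfold S. replace (Y a t) with (G a) by (unfold Y, level; rewrite Ht; field).
  now apply Ginv_G.
Qed.

Lemma Y_pos_extended a : admissible a ->
  exists t1, 1 < t1 /\ forall t, -t1 <= t <= t1 -> 0 < Y a t < Gtop.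
Proof.
  intros [[Ha0 Ha1] Hla].
  assert (HGa : 0 < G a) by (apply G_pos; lra).
  assert (HGa' : 0 < G a / (a * a)) by (apply Rdiv_lt_0_compat; nra).
  set (t1 := sqrt (1 + G a / (a * a))).
  assert (Ht1s : t1 * t1 = 1 + G a / (a * a)) by (apply sqrt_sqrt; lra).
  exists t1. split.
  - apply Rle_lt_trans with (sqrt 1); [rewrite sqrt_1 | apply sqrt_lt_1]; lra.
  - intros t Ht. unfold Y, level in *. assert (t * t <= t1 * t1) by nra.
    assert (a * a * (t1 * t1) = a * a + G a) by (rewrite Ht1s; field; lra).
    split; nra.
Qed.

(* Inverting [x = \int_{-1}^t F a] gives the parameter [t] as a function of the
   space variable [x]; it runs from -1 to 1 exactly when [T a = 1]. *)
Lemma time_reparametrization a : admissible a -> T a = 1 -> exists tau : R -> R,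
  tau 0 = -1 /\ tau 1 = 1 /\
  forall x, 0 <= x <= 1 ->
    0 < Y a (tau x) < Gtop /\ derivable_pt_lim tau x (1 / F a (tau x)).
Proof.
  intros A HT. pose proof A as [[Ha0 _] _].
  destruct (Y_pos_extended a A) as [t1 [Ht1 HY]].
  set (t2 := (1 + t1) / 2).
  assert (Ht2 : 1 < t2 < t1) by (unfold t2; lra).
  set (X := fun t => RInt (F a) (-1) t).
  assert (Hex : forall p q, -t1 <= p <= t1 -> -t1 <= q <= t1 -> ex_RInt (F a) p q).
  { intros p q Hp Hq. apply (@ex_RInt_continuous R_CompleteNormedModule). intros z Hz.
    apply continuity_pt_filterlim, continuity_pt_F, HY.
    pose proof (Rmin_glb p q (-t1)). pose proof (Rmax_lub p q t1). lra. }
  assert (HXd : forall t, -t2 <= t <= t2 -> derivable_pt_lim X t (F a t)).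
  { intros t Ht. apply is_derive_Reals, (is_derive_RInt (V := R_CompleteNormedModule) _ X (-1)).
    - assert (Hd : 0 < t1 - t2) by lra.
      exists (mkposreal _ Hd). intros b Hb. simpl in Hb.
      unfold ball in Hb; simpl in Hb; unfold AbsRing_ball, abs, minus, plus, opp in Hb;
        simpl in Hb.
      apply Rabs_def2 in Hb. apply RInt_correct, Hex; lra.
    - apply continuity_pt_filterlim, continuity_pt_F, HY. lra. }
  assert (HFpos : forall t, -t2 < t < t2 -> 0 < F a t).
  { intros t Ht. apply Rmult_lt_0_compat; auto. apply Phi_pos, S_bounds, HY. lra. }
  assert (HX1 : X (-1) = 0) by apply (RInt_point (V := R_CompleteNormedModule)).
  assert (HX2 : X 1 = 1) by exact HT.
  assert (HXlo : X (-t2) < 0)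
    by (rewrite <- HX1; apply (incr_on_interval X (F a) (-t2) t2); auto; lra).
  assert (HXhi : 1 < X t2)
    by (rewrite <- HX2; apply (incr_on_interval X (F a) (-t2) t2); auto; lra).
  exists (interval_inv X (-t2) t2). split; [|split].
  - rewrite <- HX1. apply (interval_inv_f X (F a)); auto; lra.
  - rewrite <- HX2 at 1. apply (interval_inv_f X (F a)); auto; lra.
  - intros x Hx.
    destruct (interval_inv_spec X (F a) (-t2) t2 ltac:(lra) HXd x ltac:(lra)) as [Hb _].
    split; [apply HY; lra|].
    apply (derivable_pt_lim_interval_inv X (F a)); auto; lra.
Qed.

Lemma solution_of_T_eq_1 a : admissible a -> T a = 1 ->
  exists u v : R -> R, stationary_solution c alpha u v /\
    (exists x, 0 <= x <= 1 /\ (u x <> 0 \/ v x <> 0)).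
Proof.
  intros A HT. pose proof A as [[Ha0 Ha1] _].
  destruct (time_reparametrization a A HT) as [tau [Htau0 [Htau1 Htau]]].
  set (s := fun x => S a (tau x)).
  set (d := fun x => a * tau x).
  set (s' := fun x => 1 / g (S a (tau x)) * - (a * a * tau x) * (1 / F a (tau x))).
  set (d' := fun x => a * (1 / F a (tau x))).
  assert (Hs0 : s 0 = a) by (unfold s; rewrite Htau0; apply S_unit; lra).
  assert (Hs1 : s 1 = a) by (unfold s; rewrite Htau1; apply S_unit; lra).
  exists (affine_ext (fun x => (s x + d x) / 2) (fun x => (s' x + d' x) / 2)),
         (affine_ext (fun x => (s x - d x) / 2) (fun x => (s' x - d' x) / 2)).
  split.
  - apply stationary_solution_of_sum_diff.
    + intros x Hx. destruct (Htau x Hx) as [HY Hd].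
      apply (derivable_pt_lim_comp tau (S a)); [exact Hd | now apply S_deriv].
    + intros x Hx. apply derivable_pt_lim_scal, Htau; auto.
    + intros x Hx. destruct (Htau x Hx) as [HY _].
      destruct (S_bounds a (tau x) HY) as [HS0 HS1].
      unfold s, d, s', d', F, Phi, g.
      set (z := S a (tau x)) in *.
      repeat split; [lra | field | field]; repeat split; lra.
    + rewrite Hs0. unfold d. rewrite Htau0. ring.
    + rewrite Hs1. unfold d. rewrite Htau1. ring.
  - exists 1. split; [lra|]. left.
    destruct (affine_ext_in (fun x => (s x + d x) / 2) (fun x => (s' x + d' x) / 2) 1)
      as [-> _]; [lra|].
    rewrite Hs1. unfold d. rewrite Htau1. lra.
Qed.
End Shooting.

Theorem mainTheorem7 (c b0 alpha : R) (hc : 0 < c)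
  (hb0 : smallest_pos_root c b0) (hb0int : PI / 2 < b0 < PI)
  (halpha : 1 / Rabs (cos b0) < alpha) :
  exists u v : R -> R,
    stationary_solution c alpha u v /\
    (exists x, 0 <= x <= 1 /\ (u x <> 0 \/ v x <> 0)).
Proof.
  assert (hal : 1 < alpha).
  { assert (Hc0 : cos b0 < 0) by (apply cos_lt_0; lra).
    pose proof (COS_bound b0). rewrite Rabs_left in halpha by lra.
    assert (1 < alpha * - cos b0) by (apply Rlt_div_l; lra). nra. }
  pose proof (B0_lt_1 c alpha hc hal b0 hb0 hb0int halpha) as HB.
  destruct (T_lt_1_small c alpha hc hal HB) as [r [Hr Hsmall]].
  destruct (T_gt_1_large c alpha hc hal) as [a2 [A2 HT2]].
  set (a1 := Rmin r (a2 / 2)).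
  assert (Ha1 : 0 < a1 <= r) by (destruct A2; unfold a1, Rmin; destruct Rle_dec; lra).
  assert (Ha12 : a1 < a2) by (destruct A2; unfold a1, Rmin; destruct Rle_dec; lra).
  destruct (Hsmall a1 Ha1) as [A1 HT1].
  destruct (exists_T_eq_1 c alpha hc hal a1 a2 A1 A2 Ha12 HT1 HT2) as [a [A HT]].
  exact (solution_of_T_eq_1 c alpha hc hal a A HT).
Qed.
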